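(* Let $B(x)=\frac{x}{1+x^2}$, $B_0(x)=x$ and $B_j(x)=B(B_{j-1}(x))$ for $j\ge1$ (rational functions of $x$). For every $j\ge0$, the equation $B_j(x)=-1$ has at least one root $x\in\mathbb{C}$, and this root is not a root of $B_{j'}(x)=-1$ for any $j'\neq j$. *)

From mathcomp Require Import all_boot all_order all_algebra.
Set Implicit Arguments. Unset Strict Implicit. Unset Printing Implicit Defensive.
Import Order.TTheory GRing.Theory Num.Theory.
Local Open Scope ring_scope.

(* Points of the Riemann sphere over C: [Some z] is the finite point z,
   [None] is the point at infinity. *)

Definition Bsph (C : numClosedFieldType) (y : option C) : option C :=
  match y with
  | None => Some 0
  | Some z => if 1 + z ^+ 2 == 0 then None else Some (z / (1 + z ^+ 2))
  end.

Definition Bj (C : numClosedFieldType) (j : nat) (x : C) : option C :=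
  iter j (@Bsph C) (Some x).

(* The orbit of -1 under B is real and never returns to -1: for y < 0 one has
   -1 < B(y) < 0, because y^2 + y + 1 > 0.  As B(x) = y amounts to the quadratic
   x^2 = x / y - 1, every finite point has a finite preimage, so B_j(x) = -1 has
   a root.  If B_j'(x) = -1 as well with j < j', then -1 = B^(j'-j)(-1), which
   the first fact forbids. *)
From mathcomp Require Import all_boot all_order all_algebra.
From mathcomp Require Import lra.
Import Order.TTheory GRing.Theory Num.Theory.
Local Open Scope ring_scope.

Lemma iter_eq_aperiodic {T : Type} {f : T -> T} {a x : T} {j j' : nat} :
  (forall n, (0 < n)%N -> iter n f a <> a) ->
  iter j f x = a -> iter j' f x = a -> j' = j.
Proof.
move=> aper.
suff lt_contra k k' : (k < k')%N -> iter k f x = a -> iter k' f x <> a.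
  move=> hj hj'; case: (ltngtP j j') => [lt|lt|//].
    by case: (lt_contra _ _ lt hj hj').
  by case: (lt_contra _ _ lt hj' hj).
move=> lt_kk' hk; rewrite -(subnK (ltnW lt_kk')) iterD hk.
by apply: aper; rewrite subn_gt0.
Qed.

Definition Bq (y : rat) : rat := y / (1 + y ^+ 2).

Lemma Bq_gtN1 {y : rat} : y < 0 -> -1 < Bq y < 0.
Proof.
move=> lt_y0.
have d_gt0 : 0 < 1 + y ^+ 2 by rewrite ltr_wpDr ?sqr_ge0.
rewrite ltr_pdivlMr // ltr_pdivrMr // mul0r lt_y0 andbT.
have := sqr_ge0 (2 * y + 1); nra.
Qed.

Lemma iter_Bq_lt0 (k : nat) : iter k Bq (-1) < 0.
Proof.
elim: k => [|k IHk]; first by rewrite /= ltrN10.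
by rewrite iterS; case/andP: (Bq_gtN1 IHk).
Qed.

Lemma iter_Bq_gtN1 {k : nat} : (0 < k)%N -> -1 < iter k Bq (-1).
Proof.
by case: k => // k _; rewrite iterS; case/andP: (Bq_gtN1 (iter_Bq_lt0 k)).
Qed.

Section RiemannSphere.

Variable C : numClosedFieldType.

Lemma Bsph_ratr (y : rat) :
  Bsph (Some (ratr y : C)) = Some (ratr (Bq y)).
Proof.
have d_neq0 : 1 + y ^+ 2 != 0 by rewrite lt0r_neq0 // ltr_wpDr ?sqr_ge0.
rewrite /= -(rmorphXn _ 2) -(rmorph1 ratr) -rmorphD.
by rewrite fmorph_eq0 (negbTE d_neq0) fmorph_div.
Qed.

Lemma iter_Bsph_N1 (k : nat) :
  iter k (@Bsph C) (Some (-1)) = Some (ratr (iter k Bq (-1))).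
Proof.
elim: k => [|k IHk]; first by rewrite /= rmorphN1.
by rewrite iterS IHk Bsph_ratr.
Qed.

Lemma Bsph_aperiodic_N1 (n : nat) :
  (0 < n)%N -> iter n (@Bsph C) (Some (-1)) <> Some (-1).
Proof.
move=> n_gt0; rewrite iter_Bsph_N1 => -[].
by have := iter_Bq_gtN1 n_gt0; rewrite -(ltr_rat C) rmorphN1 => /gt_eqF/eqP.
Qed.

Lemma Bsph_surj (y : C) :
  exists x : C, Bsph (Some x) = Some y.
Proof.
have [->|y_neq0] := eqVneq y 0.
  by exists 0; rewrite /= expr0n addr0 oner_eq0 mul0r.
have [x] := @solve_monicpoly C 2 (fun i => if i == 0%N then -1 else y^-1) isT.
rewrite big_ord_recr big_ord1 /= expr0 mulr1 expr1 => x2E.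
have dE : 1 + x ^+ 2 = y^-1 * x by rewrite x2E addNKr.
have x_neq0 : x != 0.
  apply: contra_eq_neq x2E => ->.
  by rewrite mulr0 addr0 expr0n eq_sym oppr_eq0 oner_eq0.
exists x; rewrite /= dE mulf_eq0 invr_eq0 (negbTE x_neq0) (negbTE y_neq0) /=.
by rewrite invfM invrK mulrCA divff ?mulr1.
Qed.

Lemma Bj_surj (j : nat) (y : C) :
  exists x : C, Bj j x = Some y.
Proof.
elim: j y => [|j IHj] y; first by exists y.
have [x' <-] := IHj y; have [x xE] := Bsph_surj x'.
by exists x; rewrite /Bj iterSr xE.
Qed.

End RiemannSphere.

Theorem proposition2p6 (C : numClosedFieldType) (j : nat) :
  exists x : C, Bj j x = Some (-1) /\
    (forall j' : nat, j' <> j -> Bj j' x <> Some (-1)).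
Proof.
have [x xE] := Bj_surj C j (-1).
exists x; split=> // j' ne_j'j xE'.
exact: ne_j'j (iter_eq_aperiodic (Bsph_aperiodic_N1 C) xE xE').
Qed.
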